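(* Let $\Gamma$ be a $(d+1)$-vertex-connected graph with at least $d+1$ vertices, and let $(q,\Gamma)$ be a framework in $\mathbb{R}^d$ with the convex containment property. Then there is a non-symmetric equilibrium stress matrix $\Omega$ of $(q,\Gamma)$ such that for every non-exceptional vertex $i$ and every neighbor $j$ of $i$, $\Omega_{ij}>0$.
   Context: A framework $(q,\Gamma)$ in $\mathbb{R}^d$ has the convex containment property if (1) for each vertex, the positions of its neighbors have affine span of dimension $d$, and (2) there is a set of $d+1$ exceptional vertices such that every other (non-exceptional) vertex $i$ has $q(i)$ in the interior of the convex hull of the positions of its neighbors. A non-symmetric equilibrium stress matrix of $(q,\Gamma)$ is a real matrix $\Omega$ indexed by $V\times V$ with $\Omega(u,w)=0$ whenever $u\ne w$ and $\{u,w\}$ is not an edge, $\sum_w\Omega(u,w)=0$ for all $u$, and $\sum_w\Omega(u,w)q(w)=0$ for all $u$. *)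

From HB Require Import structures.
From mathcomp Require Import all_boot all_order all_algebra.
From mathcomp Require Import all_classical all_reals all_analysis.
Set Implicit Arguments. Unset Strict Implicit. Unset Printing Implicit Defensive.
Import Order.TTheory GRing.Theory Num.Theory.
Import numFieldTopology.Exports numFieldNormedType.Exports.
Local Open Scope classical_set_scope.
Local Open Scope ring_scope.

Definition simple_graph (V : finType) (e : rel V) : Prop :=
  symmetric e /\ irreflexive e.

Definition nbrs (V : finType) (e : rel V) (i : V) : {set V} := [set j | e i j].

Definition induced_connected (V : finType) (e : rel V) (W : {set V}) : Prop :=
  forall x y, x \in W -> y \in W ->
    connect [rel u v | [&& e u v, u \in W & v \in W]] x y.

(* k-vertex-connected: removing any set of fewer than k vertices leaves a
   connected graph (the vertex-count requirement is a separate hypothesis). *)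
Definition vertex_connected (V : finType) (e : rel V) (k : nat) : Prop :=
  forall S : {set V}, (#|S| < k)%N -> induced_connected e (~: S).

Definition affine_span_full (R : realType) (d : nat) (V : finType)
    (q : V -> 'rV[R]_d) (S : {set V}) : Prop :=
  exists2 j0, j0 \in S &
    row_full (\sum_(j in S) <<q j - q j0>>)%MS.

Definition conv_hull (R : realType) (d : nat) (V : finType)
    (q : V -> 'rV[R]_d) (S : {set V}) : set 'rV[R]_d :=
  [set x | exists lam : V -> R,
     [/\ forall j, 0 <= lam j,
         forall j, j \notin S -> lam j = 0,
         \sum_(j in S) lam j = 1 &
         x = \sum_(j in S) lam j *: q j]].

(* Convex containment property, with X the set of d+1 exceptional vertices. *)
Definition convex_containment (R : realType) (d : nat) (V : finType)
    (e : rel V) (q : V -> 'rV[R]_d) (X : {set V}) : Prop :=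
  [/\ forall i, affine_span_full q (nbrs e i),
      #|X| = d.+1 &
      forall i, i \notin X -> interior (conv_hull q (nbrs e i)) (q i)].

Definition ns_equilibrium_stress (R : realType) (d : nat) (V : finType)
    (e : rel V) (q : V -> 'rV[R]_d) (Om : V -> V -> R) : Prop :=
  [/\ forall u w, u != w -> ~~ e u w -> Om u w = 0,
      forall u, \sum_(w : V) Om u w = 0 &
      forall u, \sum_(w : V) Om u w *: q w = 0].

From HB Require Import structures.
From mathcomp Require Import all_boot all_order all_algebra.
From mathcomp Require Import all_classical all_reals all_analysis.
From mathcomp Require Import lra.
Import Order.TTheory GRing.Theory Num.Theory.
Import numFieldTopology.Exports numFieldNormedType.Exports.
Set Implicit Arguments. Unset Strict Implicit.
Local Open Scope ring_scope.

(* A point q(i) in the interior of the convex hull of its neighbours is a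
   convex combination of them with strictly positive weights: push q(i) a
   little away from the centroid c of the neighbours, to a point y still in
   the hull; q(i) is then a convex combination of y and c, and c gives every
   neighbour positive weight.  Each such weight vector lam_i yields the row
   Omega(i, -) = lam_i - delta_i of an equilibrium stress, positive on the
   neighbours of i; the exceptional rows are set to zero. *)

Lemma interior_shift (R : realFieldType) (M : normedModType R) (A : set M)
    (x v : M) :
  interior A x -> exists2 t, 0 < t & A (x + t *: v).
Proof.
move=> /nbhs_ballP [eps /= eps0 ballA].
have v1_gt0 : 0 < `|v| + 1 by rewrite ltr_wpDl.
set t := eps / (2 * (`|v| + 1)).
have t_gt0 : 0 < t by rewrite divr_gt0 // mulr_gt0.
exists t => //; apply: ballA.
rewrite -ball_normE /= opprD addrA subrr add0r normrN normrZ gtr0_norm //.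
have tE : t * (2 * (`|v| + 1)) = eps by rewrite mulfVK // gt_eqF // mulr_gt0.
have := normr_ge0 v; nra.
Qed.

Lemma sum_delta_scale (R : pzRingType) (M : lmodType R) (V : finType)
    (u : V) (g : V -> M) :
  \sum_w (w == u)%:R *: g w = g u.
Proof.
rewrite (bigD1 u) //= eqxx scale1r big1 ?addr0 // => w /negbTE ->.
by rewrite scale0r.
Qed.

Section Barycentric.
Variables (R : realType) (d : nat) (V : finType) (q : V -> 'rV[R]_d).

Definition positive_barycentric (S : {set V}) (x : 'rV[R]_d) (lam : V -> R) :=
  [/\ forall j, j \in S -> 0 < lam j,
      forall j, j \notin S -> lam j = 0,
      \sum_j lam j = 1 &
      \sum_j lam j *: q j = x].

Definition centroid (S : {set V}) : 'rV[R]_d :=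
  #|S|%:R^-1 *: \sum_(j in S) q j.

Lemma conv_hull_card_gt0 (S : {set V}) (y : 'rV[R]_d) :
  conv_hull q S y -> (0 < #|S|)%N.
Proof.
move=> [mu [_ _ mu_sum1 _]]; rewrite lt0n; apply/negP => /eqP /cards0_eq S0.
by move: mu_sum1; rewrite S0 big_set0 => /eqP; rewrite eq_sym oner_eq0.
Qed.

Lemma conv_hull_mix_centroid (S : {set V}) (y : 'rV[R]_d) (t : R) :
  conv_hull q S y -> 0 < t ->
  exists lam, positive_barycentric S ((1 + t)^-1 *: (y + t *: centroid S)) lam.
Proof.
move=> hull_y t_gt0; have n_gt0 : 0 < #|S|%:R :> R.
  by rewrite ltr0n (conv_hull_card_gt0 hull_y).
have t1_neq0 : 1 + t != 0 by rewrite gt_eqF // addr_gt0.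
move: hull_y => [mu [mu_ge0 mu_out mu_sum1 ->]].
set lam := fun j => if j \in S then (mu j + t / #|S|%:R) / (1 + t) else 0.
have lam_out j : j \notin S -> lam j = 0 by rewrite /lam => /negbTE ->.
exists lam; split => //.
- move=> j jS; have := mu_ge0 j; have : 0 < t / #|S|%:R by rewrite divr_gt0.
  rewrite /lam jS => ? ?; apply: divr_gt0; lra.
- rewrite -(big_rmcond _ _ lam_out).
  rewrite (eq_bigr (fun j => (mu j + t / #|S|%:R) / (1 + t))); last first.
    by move=> j jS; rewrite /lam jS.
  rewrite -mulr_suml big_split /= mu_sum1 sumr_const -(mulr_natr (t / _)).
  by rewrite divfK ?gt_eqF // mulfV.
- have lamq_out j : j \notin S -> lam j *: q j = 0.
    by move/lam_out ->; rewrite scale0r.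
  rewrite -(big_rmcond _ _ lamq_out).
  rewrite (eq_bigr (fun j => (1 + t)^-1 *: (mu j *: q j + t / #|S|%:R *: q j)));
    last by move=> j jS; rewrite /lam jS -scalerDl scalerA mulrC.
  by rewrite -scaler_sumr big_split /= -scaler_sumr /centroid scalerA.
Qed.

Lemma interior_conv_hull_positive_barycentric (S : {set V}) (x : 'rV[R]_d) :
  interior (conv_hull q S) x -> exists lam, positive_barycentric S x lam.
Proof.
move=> x_int; have [t t_gt0 hull_y] := interior_shift (x - centroid S) x_int.
have [lam lamP] := conv_hull_mix_centroid hull_y t_gt0.
exists lam; suff <- : (1 + t)^-1 *: (x + t *: (x - centroid S) + t *: centroid S) = x by [].
rewrite -addrA -scalerDr subrK -{1}[x]scale1r -scalerDl scalerA.
by rewrite mulVf ?scale1r // gt_eqF // addr_gt0.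
Qed.

Definition weights_stress (X : {set V}) (lam : V -> V -> R) (u w : V) : R :=
  if u \in X then 0 else lam u w - (w == u)%:R.

Section WeightsStress.
Variables (e : rel V) (X : {set V}) (lam : V -> V -> R).
Hypothesis lamP : forall u, u \notin X -> positive_barycentric (nbrs e u) (q u) (lam u).

Lemma weights_stress_equilibrium : ns_equilibrium_stress e q (weights_stress X lam).
Proof.
rewrite /weights_stress; split=> u; have [uX|uX] := boolP (u \in X);
  rewrite ?uX ?(negbTE uX); try by [|rewrite big1 // => w _; rewrite scale0r].
- move=> w wu euw; have [_ lam_out _ _] := lamP uX.
  by rewrite lam_out ?inE // eq_sym (negbTE wu) subr0.
- have [_ _ lam_sum1 _] := lamP uX.
  have delta_sum1 : \sum_w (w == u)%:R = 1 :> R.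
    by rewrite (bigD1 u) //= eqxx big1 ?addr0 // => w /negbTE ->.
  by rewrite sumrB lam_sum1 delta_sum1 subrr.
- have [_ _ _ lam_bary] := lamP uX.
  by rewrite (eq_bigr _ (fun w _ => scalerBl _ _ _)) sumrB lam_bary sum_delta_scale subrr.
Qed.

Lemma weights_stress_gt0 (i j : V) :
  irreflexive e -> i \notin X -> e i j -> 0 < weights_stress X lam i j.
Proof.
move=> e_irr iX eij; have [lam_gt0 _ _ _] := lamP iX.
have ji : (j == i) = false by apply/negP => /eqP ji; rewrite ji e_irr in eij.
by rewrite /weights_stress (negbTE iX) ji subr0 lam_gt0 ?inE.
Qed.

End WeightsStress.
End Barycentric.

Theorem lemma5p6 (R : realType) (d : nat) (V : finType) (e : rel V)
    (q : V -> 'rV[R]_d) (X : {set V}) :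
  simple_graph e ->
  vertex_connected e d.+1 ->
  (d.+1 <= #|V|)%N ->
  convex_containment e q X ->
  exists Om : V -> V -> R,
    ns_equilibrium_stress e q Om /\
    (forall i j, i \notin X -> e i j -> 0 < Om i j).
Proof.
move=> [_ e_irr] _ _ [_ _ interior_nbrs].
have /choice [lam lamP] : forall i, exists lam,
    i \notin X -> positive_barycentric q (nbrs e i) (q i) lam.
  move=> i; have [iX|iX] := boolP (i \in X); first by exists (fun=> 0).
  have [lam ?] := interior_conv_hull_positive_barycentric (interior_nbrs i iX).
  by exists lam.
exists (weights_stress X lam); split; first exact: weights_stress_equilibrium.
move=> i j; exact: weights_stress_gt0 lamP _ _ e_irr.
Qed.
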